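(* Let $M'$ be a matroid of rank $n$ on $[d]$, let $F$ be a flat of $M'$, and let $M=M'+_Fa$ be the principal extension on $[d]\cup\{a\}$. Let $\gamma=(\gamma_p)_{p\in[d]\cup\{a\}}\in V_{\mathcal{C}(M)}$ be a tuple of vectors in $\mathbb{C}^n$ such that the restriction $(\gamma_p)_{p\in[d]}$ lies in $V_{M'}$ and $\dim\operatorname{span}(\gamma_p:p\in F)=\operatorname{rank}_{M'}(F)$. Then $\gamma\in V_M$.
   Context: Principal extension: for $a\notin[d]$, $M'+_Fa$ is the matroid on $[d]\cup\{a\}$ with bases $\mathcal{B}(M')\cup\{(\lambda\setminus\{b\})\cup\{a\}:\lambda\in\mathcal{B}(M'),\ b\in\lambda\cap F\}$ (it has rank $n$). For a matroid $N$ of rank $n$ on a finite set $E$, a realization is a tuple $(\gamma_e)_{e\in E}$ in $\mathbb{C}^n$ with $(\gamma_e)_{e\in S}$ linearly dependent iff $S$ is dependent in $N$; the matroid variety $V_N$ is the Zariski closure of the set of realizations in $(\mathbb{C}^n)^E$; the circuit variety $V_{\mathcal{C}(N)}$ is the set of tuples with $(\gamma_e)_{e\in S}$ linearly dependent for every dependent set $S$ of $N$. *)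

From HB Require Import structures.
From mathcomp Require Import all_boot all_algebra.
From mathcomp Require Import Rstruct.
From mathcomp Require Import complex.
From mathcomp Require Import mpoly.

Set Implicit Arguments.
Unset Strict Implicit.
Unset Printing Implicit Defensive.

Import GRing.Theory.
Local Open Scope ring_scope.

Definition CC : closedFieldType := complex Rdefinitions.R.

Section Matroids.
Variable T : finType.

Definition is_matroid (B : {set {set T}}) : Prop :=
  B != set0 /\
  forall B1 B2, B1 \in B -> B2 \in B ->
    forall x, x \in B1 :\: B2 ->
      exists2 y, y \in B2 :\: B1 & (B1 :\ x) :|: [set y] \in B.

Definition matroid_rank_is (B : {set {set T}}) (n : nat) : Prop :=
  forall b, b \in B -> #|b| = n.

Definition indep (B : {set {set T}}) (S : {set T}) : bool :=
  [exists b in B, S \subset b].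

Definition dependent (B : {set {set T}}) (S : {set T}) : bool := ~~ indep B S.

Definition mrank (B : {set {set T}}) (S : {set T}) : nat :=
  \max_(I : {set T} | (I \subset S) && indep B I) #|I|.

Definition is_flat (B : {set {set T}}) (F : {set T}) : Prop :=
  forall e, e \notin F -> (mrank B F < mrank B (e |: F))%N.

End Matroids.

(* Principal extension M' +_F a on [d] ∪ {a}; the ground set is option 'I_d,
   with a represented by None and p ∈ [d] represented by Some p. *)
Definition principal_ext (d : nat) (B : {set {set 'I_d}}) (F : {set 'I_d})
  : {set {set option 'I_d}} :=
  [set [set Some x | x in b] | b : {set 'I_d} in B] :|:
  [set None |: [set Some x | x in b :\ y] | b : {set 'I_d} in B, y : 'I_d in b :&: F].

Section Varieties.
Variables (E : finType) (n : nat).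

Definition lin_indep (g : E -> 'rV[CC]_n) (S : {set E}) : bool :=
  free [seq g e | e <- enum S].

Definition realization (B : {set {set E}}) (g : E -> 'rV[CC]_n) : Prop :=
  forall S : {set E}, ~~ lin_indep g S = dependent B S.

Definition coords (g : E -> 'rV[CC]_n) : 'I_#|{: E * 'I_n}| -> CC :=
  fun k => let ei := enum_val k in g ei.1 0 ei.2.

Definition zariski_closure (X : (E -> 'rV[CC]_n) -> Prop)
  (g : E -> 'rV[CC]_n) : Prop :=
  forall p : {mpoly CC[#|{: E * 'I_n}|]},
    (forall h, X h -> p.@[coords h] = 0) -> p.@[coords g] = 0.

Definition matroid_variety (B : {set {set E}}) (g : E -> 'rV[CC]_n) : Prop :=
  zariski_closure (realization B) g.

Definition circuit_variety (B : {set {set E}}) (g : E -> 'rV[CC]_n) : Prop :=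
  forall S : {set E}, dependent B S -> ~~ lin_indep g S.

End Varieties.

(* Since dim span(γ_F) = rank(F), a maximal independent subfamily γ_J of γ_F
   spans γ_F and has rank(F) elements, so {a} ∪ J is dependent in M and the
   circuit relations put γ_a in span(γ_F): γ_a = Σ_f c_f γ_f.  Hence γ is the
   image of its restriction under the linear map h ↦ (h, Σ_f c_f h_f), and
   linear maps carry Zariski closures into Zariski closures; it remains to show
   (h, Σ_f c_f h_f) ∈ V_M for every realization h of M'.  Along the curve
   t ↦ (h, Σ_f (c_f + t^(f+1)) h_f) the new vector avoids span(h_S) for every
   independent S whose span misses some h_f (f ∈ F), except at the roots of one
   nonzero polynomial per S (nonzero because the exponents f+1 are distinct).
   Off those finitely many t the curve is a realization of M, so the whole
   curve, and in particular its point t = 0, lies in V_M. *)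

From HB Require Import structures.
From mathcomp Require Import all_boot all_algebra.
From mathcomp Require Import Rstruct complex mpoly.

Set Implicit Arguments.
Unset Strict Implicit.
Unset Printing Implicit Defensive.
Import GRing.Theory.
Local Open Scope ring_scope.

Section OptionSets.
Variable T : finType.
Implicit Types (A : {set T}) (S : {set option T}).

Lemma mem_imset_Some A x : (Some x \in Some @: A) = (x \in A).
Proof. exact: mem_imset Some_inj. Qed.

Lemma None_notin_imset_Some A : None \notin Some @: A.
Proof. by apply/imsetP => -[]. Qed.

Lemma subset_imset_Some S A :
  (S \subset Some @: A) = (None \notin S) && (Some @^-1: S \subset A).
Proof.
apply/subsetP/andP => [sub | [NS sub] [x|] xS].
- split; first by apply: contra (None_notin_imset_Some A) => /sub.
  by apply/subsetP => x; rewrite inE => /sub; rewrite mem_imset_Some.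
- by rewrite mem_imset_Some (subsetP sub) ?inE.
- by rewrite xS in NS.
Qed.

Lemma subset_setU1_None_imset_Some S A :
  (S \subset None |: Some @: A) = (Some @^-1: S \subset A).
Proof.
apply/subsetP/subsetP => [sub x | sub [x|] xS]; rewrite ?inE ?eqxx //.
- by move=> /sub; rewrite !inE mem_imset_Some.
- by rewrite mem_imset_Some sub ?inE.
Qed.

Lemma preimset_Some_setU1_None A : Some @^-1: (None |: Some @: A) = A.
Proof. by apply/setP => x; rewrite !inE mem_imset_Some. Qed.

Lemma perm_enum_option S :
  perm_eq (enum S)
    ((if None \in S then [:: None] else [::]) ++ map Some (enum (Some @^-1: S))).
Proof.
apply: uniq_perm; first exact: enum_uniq.
  case: ifP => _ /=; rewrite (map_inj_uniq Some_inj) enum_uniq ?andbT //.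
  by apply/mapP => -[].
move=> [x|]; rewrite mem_enum mem_cat.
  by rewrite (mem_map Some_inj) mem_enum inE; case: ifP.
by case: ifP => NS; rewrite ?inE ?eqxx //=; apply/esym/mapP => -[].
Qed.

Lemma perm_enum_setU1 (x : T) A :
  x \notin A -> perm_eq (enum (x |: A)) (x :: enum A).
Proof.
move=> xA; apply: uniq_perm => [||y]; rewrite ?enum_uniq //=.
  by rewrite mem_enum xA enum_uniq.
by rewrite mem_enum !inE mem_enum.
Qed.

End OptionSets.

Section PrincipalExtension.
Variables (d : nat) (B : {set {set 'I_d}}) (F : {set 'I_d}).

Lemma principal_extP (b' : {set option 'I_d}) :
  reflect
    ((exists2 b, b \in B & b' = Some @: b) \/
     (exists2 b, b \in B & exists2 y, y \in b :&: F & b' = None |: Some @: (b :\ y)))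
    (b' \in principal_ext B F).
Proof.
rewrite inE; apply: (iffP orP) => [[/imsetP[b bB ->] | /imset2P[b y bB yb ->]] |].
- by left; exists b.
- by right; exists b => //; exists y.
case=> [[b bB ->] | [b bB [y yb ->]]]; first by left; apply: imset_f.
by right; apply/imset2P; exists b y.
Qed.

Lemma indep_principal_ext (S : {set option 'I_d}) :
  indep (principal_ext B F) S =
  if None \in S then [exists f in F :\: Some @^-1: S, indep B (f |: Some @^-1: S)]
  else indep B (Some @^-1: S).
Proof.
set S' := Some @^-1: S; apply/existsP/idP.
  move=> [_ /andP[/principal_extP[[b bB ->] | [b bB [y /setIP[yb yF] ->]]]]].
    by rewrite subset_imset_Some => /andP[/negbTE -> sub]; apply/existsP; exists b; rewrite bB.
  rewrite subset_setU1_None_imset_Some => sub.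
  have subb : S' \subset b by apply: subset_trans sub (subsetDl _ _).
  case: ifP => _; last by apply/existsP; exists b; rewrite bB.
  apply/existsP; exists y; rewrite inE yF andbT; apply/andP; split.
    by apply/negP => /(subsetP sub); rewrite !inE eqxx.
  by apply/existsP; exists b; rewrite bB subUset sub1set yb.
case: ifP => NS.
  move=> /existsP[f /andP[/setDP[fF fS'] /existsP[b /andP[bB]]]].
  rewrite subUset sub1set => /andP[fb sub].
  exists (None |: Some @: (b :\ f)); rewrite subset_setU1_None_imset_Some.
  rewrite subsetD1 sub fS' /= andbT; apply/principal_extP; right.
  by exists b => //; exists f; rewrite ?inE ?fb.
move=> /existsP[b /andP[bB sub]]; exists (Some @: b).
by rewrite subset_imset_Some NS sub /= andbT; apply/principal_extP; left; exists b.
Qed.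

End PrincipalExtension.

Lemma exists_notin_span (K : fieldType) (vT : vectType K) (U : {vspace vT}) X v :
  v \in <<X>>%VS -> v \notin U -> exists2 x, x \in X & x \notin U.
Proof.
move=> vX vU; have /hasP[x xX xU] : has (predC (mem U)) X.
  by rewrite has_predC; apply: contra vU => /allP XU; apply: subvP vX; apply/span_subvP.
by exists x.
Qed.

Lemma mem_span_enumP (K : fieldType) (vT : vectType K) (I : finType) (A : {set I})
    (w : I -> vT) v :
  v \in <<[seq w i | i <- enum A]>>%VS -> exists c : I -> K, v = \sum_(i in A) c i *: w i.
Proof.
rewrite span_def big_map big_enum /= => /memv_sumP[vs vsA ->].
have /fin_all_exists[c vsc] : forall i, exists k : K, i \in A -> vs i = k *: w i.
  move=> i; case: (boolP (i \in A)) => [/vsA/vlineP[k ->] | iA]; first by exists k.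
  by exists 0.
by exists c; apply: eq_bigr => i /vsc.
Qed.

Lemma free_subset_spanning (K : fieldType) (vT : vectType K) (I : finType)
    (w : I -> vT) (A : {set I}) :
  exists2 J : {set I}, J \subset A & free [seq w i | i <- enum J] &&
    (<<[seq w i | i <- enum A]>> <= <<[seq w i | i <- enum J]>>)%VS.
Proof.
pose P (J : {set I}) := (J \subset A) && free [seq w i | i <- enum J].
have P0 : P set0 by rewrite /P sub0set enum_set0 nil_free.
have [J /andP[JA frJ] Jmax] := arg_maxnP (fun J : {set I} => #|J|) P0.
exists J => //; rewrite frJ; apply/span_subvP => _ /mapP[f + ->]; rewrite mem_enum => fA.
case fJ: (f \in J); first by apply/memv_span/map_f; rewrite mem_enum.
apply: contraT => wf; have := Jmax (f |: J); rewrite /P subUset sub1set fA JA.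
rewrite (perm_free (perm_map _ (perm_enum_setU1 (negbT fJ)))) /= free_cons wf frJ.
by rewrite cardsU1 fJ => /(_ isT); rewrite ltnn.
Qed.

Lemma separating_weights (K : fieldType) n (I : finType) (P : pred I)
    (U : {vspace 'rV[K]_n}) (w : I -> 'rV[K]_n) :
  (exists2 i, P i & w i \notin U) ->
  exists2 phi : I -> K, (exists2 i, P i & phi i != 0) &
    forall a : I -> K, \sum_(i | P i) a i * phi i != 0 -> \sum_(i | P i) a i *: w i \notin U.
Proof.
move=> [i0 Pi0 wU]; pose r x := x - projv U x.
have r_eq0 x : (r x == 0) = (x \in U).
  apply/eqP/idP => [/subr0_eq -> | xU]; first exact: memv_proj.
  by rewrite /r projv_id ?subrr.
have [j rj] : exists j, r (w i0) 0 j != 0.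
  case: (pickP (fun j => r (w i0) 0 j != 0)) => [j rj | all0]; first by exists j.
  move: wU; rewrite -r_eq0 => /negP[]; apply/eqP/rowP => j; rewrite [RHS]mxE.
  exact/eqP/negbFE/all0.
exists (fun i => r (w i) 0 j); first by exists i0.
move=> a; apply: contra => sumU.
have r_sum : r (\sum_(i | P i) a i *: w i) = \sum_(i | P i) a i *: r (w i).
  by rewrite /r linear_sum -sumrB; apply: eq_bigr => i _; rewrite linearZ scalerBr.
move: sumU; rewrite -r_eq0 r_sum => /eqP/rowP/(_ j); rewrite summxE [RHS]mxE => sum0.
by apply/eqP; apply: etrans sum0; apply: eq_bigr => i _; rewrite [RHS]mxE.
Qed.

Section LinIndep.
Variable n : nat.

Lemma lin_indep_setU1 (E : finType) (h : E -> 'rV[CC]_n) x (A : {set E}) :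
  x \notin A -> lin_indep h (x |: A) = free (h x :: [seq h e | e <- enum A]).
Proof. by move=> xA; rewrite /lin_indep (perm_free (perm_map _ (perm_enum_setU1 xA))). Qed.

Lemma lin_indep_option (T : finType) (g : option T -> 'rV[CC]_n) (S : {set option T}) :
  lin_indep g S =
  if None \in S then free (g None :: [seq g (Some x) | x <- enum (Some @^-1: S)])
  else lin_indep (fun x => g (Some x)) (Some @^-1: S).
Proof.
rewrite /lin_indep (perm_free (perm_map _ (perm_enum_option S))).
by case: ifP => _ /=; rewrite -map_comp.
Qed.

End LinIndep.

Section RealizationCriterion.
Variables (d n : nat) (B : {set {set 'I_d}}) (F : {set 'I_d}) (h : 'I_d -> 'rV[CC]_n).
Hypothesis hR : realization B h.

Lemma realization_oapp (v : 'rV[CC]_n) :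
  v \in <<[seq h f | f <- enum F]>>%VS ->
  (forall S : {set 'I_d}, free [seq h x | x <- enum S] ->
     (exists2 f, f \in F & h f \notin <<[seq h x | x <- enum S]>>%VS) ->
     v \notin <<[seq h x | x <- enum S]>>%VS) ->
  realization (principal_ext B F) (oapp h v).
Proof.
move=> vF vgen S; rewrite /dependent; congr negb.
have indep_h S0 : indep B S0 = lin_indep h S0 by apply: negb_inj; rewrite hR.
rewrite lin_indep_option indep_principal_ext; case: ifP => _; last by rewrite indep_h.
set S0 := Some @^-1: S; rewrite free_cons /=.
apply/andP/existsP => [[vS0 frS0] | [f /andP[/setDP[fF fS0]]]].
  have [_ /mapP[f + ->] hfS0] := exists_notin_span vF vS0; rewrite mem_enum => fF.
  have fS0 : f \notin S0.
    by apply: contra hfS0 => fS0; apply/memv_span/map_f; rewrite mem_enum.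
  by exists f; rewrite inE fF fS0 indep_h lin_indep_setU1 // free_cons hfS0.
rewrite indep_h lin_indep_setU1 // free_cons => /andP[hfS0 frS0].
by split => //; apply: vgen => //; exists f.
Qed.

End RealizationCriterion.

Lemma comb_Xpow_neq0 (R : nzRingType) d (F : {set 'I_d}) (c phi : 'I_d -> R) :
  (exists2 f, f \in F & phi f != 0) ->
  \sum_(f in F) ((c f)%:P + 'X^(f.+1)) * (phi f)%:P != 0.
Proof.
move=> [f0 f0F phi0]; apply: contra phi0 => /eqP/(congr1 (coefp f0.+1)) /=.
rewrite coef0 coef_sum (bigD1 f0) //= big1 ?addr0.
  by rewrite coefMC coefD coefC coefXn eqxx add0r mul1r => ->.
move=> f /andP[_ ff0]; rewrite coefMC coefD coefC coefXn eqSS.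
have /negbTE -> : (f0 : nat) != f by rewrite eq_sym.
by rewrite add0r mul0r.
Qed.

Lemma generic_comb_notin_vspace (K : fieldType) n d (F : {set 'I_d})
    (U : {vspace 'rV[K]_n}) (w : 'I_d -> 'rV[K]_n) (c : 'I_d -> K) :
  (exists2 f, f \in F & w f \notin U) ->
  exists2 L : {poly K}, L != 0 &
    forall t, L.[t] != 0 -> \sum_(f in F) (c f + t ^+ f.+1) *: w f \notin U.
Proof.
move=> /separating_weights[phi phi_neq0 sep].
exists (\sum_(f in F) ((c f)%:P + 'X^(f.+1)) * (phi f)%:P); first exact: comb_Xpow_neq0.
move=> t; rewrite horner_sum.
under eq_bigr do rewrite hornerM hornerD !hornerC hornerXn.
exact: (sep (fun f => c f + t ^+ f.+1)).
Qed.

Section GenericRealization.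
Variables (d n : nat) (B : {set {set 'I_d}}) (F : {set 'I_d}) (h : 'I_d -> 'rV[CC]_n).
Hypothesis hR : realization B h.

Lemma generic_realization (c : 'I_d -> CC) :
  exists2 D : {poly CC}, D != 0 & forall t, D.[t] != 0 ->
    realization (principal_ext B F) (oapp h (\sum_(f in F) (c f + t ^+ f.+1) *: h f)).
Proof.
pose span_h (S : {set 'I_d}) := <<[seq h x | x <- enum S]>>%VS.
have /fin_all_exists[L LP] : forall S, exists L : {poly CC}, L != 0 /\
    ((exists2 f, f \in F & h f \notin span_h S) ->
     forall t, L.[t] != 0 -> \sum_(f in F) (c f + t ^+ f.+1) *: h f \notin span_h S).
  move=> S.
  case: (pickP [pred f in F | h f \notin span_h S]) => [f /andP[fF hf] | none].
    have [L L_neq0 HL] := generic_comb_notin_vspace c (ex_intro2 _ _ f fF hf).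
    by exists L.
  exists 1; split => [|[f fF hf]]; first exact: oner_neq0.
  by have := none f; rewrite /= fF hf.
exists (\prod_S L S); first by apply/prodf_neq0 => S _; case: (LP S).
move=> t; rewrite horner_prod => /prodf_neq0 Lt; apply: realization_oapp => //.
  apply: rpred_sum => f fF; apply/memvZ/memv_span/map_f; by rewrite mem_enum.
by move=> S _ hS; apply: (LP S).2 hS t (Lt S isT).
Qed.

End GenericRealization.

Lemma poly_horner_eq0 (K : closedFieldType) (Q : {poly K}) :
  (forall t, Q.[t] = 0) -> Q = 0.
Proof.
move=> Q0; apply/eqP; apply: contraT => Q_neq0.
have sQ : (0 < size Q)%N by rewrite size_poly_gt0.
have sQX : size (Q * 'X) = (size Q).+1 by rewrite size_mulX.
have /closed_rootP[t /rootP] : size (Q * 'X + 1) != 1.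
  by rewrite size_polyDl sQX ?size_poly1 ?ltnS // eqSS -lt0n.
by rewrite hornerD hornerMX Q0 hornerC mul0r add0r => /eqP; rewrite oner_eq0.
Qed.

Lemma horner_meval_polyC (R : comNzRingType) N (p : {mpoly R[N]})
    (V : 'I_N -> {poly R}) t :
  (meval V (map_mpoly polyC p)).[t] = p.@[fun k => (V k).[t]].
Proof.
rewrite !mevalE (perm_big _ (msupp_map_mpoly _ polyC_inj)) horner_sum.
apply: eq_bigr => m _; rewrite mcoeff_map_mpoly hornerCM horner_prod.
by congr (_ * _); apply: eq_bigr => i _; rewrite horner_exp.
Qed.

Section ZariskiClosure.
Variable n : nat.

Lemma zariski_closure_eqfun (E : finType) (X : (E -> 'rV[CC]_n) -> Prop) g1 g2 :
  g1 =1 g2 -> zariski_closure X g1 -> zariski_closure X g2.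
Proof.
move=> g12 Xg1 p Xp; rewrite -(Xg1 p Xp).
by apply: meval_eq => k; rewrite /coords g12.
Qed.

Lemma zariski_closure_curve (E : finType) (X : (E -> 'rV[CC]_n) -> Prop)
    (gam : CC -> E -> 'rV[CC]_n) (V : 'I_#|{: E * 'I_n}| -> {poly CC}) (D : {poly CC}) :
  (forall t k, coords (gam t) k = (V k).[t]) -> D != 0 ->
  (forall t, D.[t] != 0 -> X (gam t)) ->
  forall t, zariski_closure X (gam t).
Proof.
move=> gamV D_neq0 XD t p Xp; pose P := meval V (map_mpoly polyC p).
have P_gam s : P.[s] = p.@[coords (gam s)].
  by rewrite horner_meval_polyC; apply: meval_eq => k; rewrite gamV.
have /eqP : P * D = 0.
  apply: poly_horner_eq0 => s; rewrite hornerM.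
  have [-> | Ds] := eqVneq D.[s] 0; first by rewrite mulr0.
  by rewrite P_gam Xp ?mul0r //; apply: XD.
by rewrite mulf_eq0 (negbTE D_neq0) orbF -P_gam => /eqP ->; rewrite horner0.
Qed.

Lemma zariski_closure_poly_map (E1 E2 : finType) (X : (E1 -> 'rV[CC]_n) -> Prop)
    (Y : (E2 -> 'rV[CC]_n) -> Prop) (phi : (E1 -> 'rV[CC]_n) -> E2 -> 'rV[CC]_n)
    (q : 'I_#|{: E2 * 'I_n}| -> {mpoly CC[#|{: E1 * 'I_n}|]}) :
  (forall h k, coords (phi h) k = (q k).@[coords h]) ->
  (forall h, X h -> zariski_closure Y (phi h)) ->
  forall h, zariski_closure X h -> zariski_closure Y (phi h).
Proof.
move=> phi_q XY h Xh p Yp; pose lq := [tuple q k | k < #|{: E2 * 'I_n}|].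
have comp_phi h' : (p \mPo lq).@[coords h'] = p.@[coords (phi h')].
  by rewrite comp_mpoly_meval; apply: meval_eq => k; rewrite tnth_mktuple phi_q.
by rewrite -comp_phi; apply: Xh => h' Xh'; rewrite comp_phi; apply: XY.
Qed.

End ZariskiClosure.

Section PrincipalExtensionVariety.
Variables (d n : nat) (F : {set 'I_d}) (c : 'I_d -> CC).

Lemma oapp_comb_poly_map :
  exists q : 'I_#|{: option 'I_d * 'I_n}| -> {mpoly CC[#|{: 'I_d * 'I_n}|]},
    forall (h : 'I_d -> 'rV[CC]_n) k,
      coords (oapp h (\sum_(f in F) c f *: h f)) k = (q k).@[coords h].
Proof.
exists (fun k => let: (o, i) := enum_val k in
  if o is Some x then 'X_(enum_rank (x, i)) else \sum_(f in F) c f *: 'X_(enum_rank (f, i))).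
move=> h k; rewrite /coords; case: (enum_val k) => [[x|] i] /=.
  by rewrite mevalXU enum_rankK.
rewrite (big_morph _ (mevalD _) (meval0 _)) summxE; apply: eq_bigr => f _.
by rewrite mevalZ mevalXU enum_rankK !mxE.
Qed.

Lemma matroid_variety_oapp_comb (B : {set {set 'I_d}}) (h : 'I_d -> 'rV[CC]_n) :
  realization B h -> matroid_variety (principal_ext B F) (oapp h (\sum_(f in F) c f *: h f)).
Proof.
move=> hR; have [D D_neq0 DR] := generic_realization F hR c.
pose V (k : 'I_#|{: option 'I_d * 'I_n}|) : {poly CC} := let: (o, i) := enum_val k in
  if o is Some x then (h x 0 i)%:P else \sum_(f in F) ((c f)%:P + 'X^(f.+1)) * (h f 0 i)%:P.
have coordsV t k :
    coords (oapp h (\sum_(f in F) (c f + t ^+ f.+1) *: h f)) k = (V k).[t].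
  rewrite /coords /V; case: (enum_val k) => [[x|] i] /=; first by rewrite hornerC.
  rewrite horner_sum summxE; apply: eq_bigr => f _.
  by rewrite hornerM hornerD !hornerC hornerXn !mxE.
have := zariski_closure_curve coordsV D_neq0 DR 0.
suff -> : \sum_(f in F) c f *: h f = \sum_(f in F) (c f + 0 ^+ f.+1) *: h f by [].
by apply: eq_bigr => f _; rewrite expr0n addr0.
Qed.

End PrincipalExtensionVariety.

Lemma circuit_variety_mem_span d n (B : {set {set 'I_d}}) (F : {set 'I_d})
    (g : option 'I_d -> 'rV[CC]_n) :
  circuit_variety (principal_ext B F) g ->
  \dim (span [seq g (Some p) | p <- enum F]) = mrank B F ->
  g None \in <<[seq g (Some p) | p <- enum F]>>%VS.
Proof.
move=> g_circ dimF.
have [J JF /andP[frJ FJ]] := free_subset_spanning (fun p => g (Some p)) F.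
have spanJ : <<[seq g (Some p) | p <- enum J]>>%VS = <<[seq g (Some p) | p <- enum F]>>%VS.
  apply/eqP; rewrite eqEsubv FJ andbT; apply/span_subvP => _ /mapP[p + ->].
  by rewrite mem_enum => pJ; apply/memv_span/map_f; rewrite mem_enum (subsetP JF).
have cardJ : #|J| = mrank B F by rewrite -dimF -spanJ (eqP frJ) size_map cardE.
have dep : dependent (principal_ext B F) (None |: Some @: J).
  rewrite /dependent indep_principal_ext setU11 preimset_Some_setU1_None.
  apply/existsP => -[f /andP[/setDP[fF fJ] indep_fJ]].
  have : (#|f |: J| <= mrank B F)%N.
    by apply: leq_bigmax_cond; rewrite subUset sub1set fF JF.
  by rewrite cardsU1 fJ cardJ ltnn.
have := g_circ _ dep; rewrite lin_indep_option setU11 preimset_Some_setU1_None.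
by rewrite free_cons frJ andbT negbK spanJ.
Qed.

Theorem lemma8p4 (d n : nat) (B' : {set {set 'I_d}}) (F : {set 'I_d})
    (g : option 'I_d -> 'rV[CC]_n) :
  is_matroid B' ->
  matroid_rank_is B' n ->
  is_flat B' F ->
  circuit_variety (principal_ext B' F) g ->
  matroid_variety B' (fun p : 'I_d => g (Some p)) ->
  \dim (span [seq g (Some p) | p <- enum F]) = mrank B' F ->
  matroid_variety (principal_ext B' F) g.
Proof.
move=> _ _ _ g_circ g_restr dimF.
have [c g_None] := mem_span_enumP (circuit_variety_mem_span g_circ dimF).
have [q q_coords] := oapp_comb_poly_map n F c.
pose g1 := oapp (fun p => g (Some p)) (\sum_(f in F) c f *: g (Some f)).
apply: (zariski_closure_eqfun (g1 := g1)).
  by case=> //=; rewrite g_None.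
apply: (zariski_closure_poly_map q_coords) g_restr => h hR.
exact: matroid_variety_oapp_comb.
Qed.
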